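(* Suppose that all state functions and controls are continuously differentiable on $I$. As long as $\epsilon(t)\neq 0$, $n^j(t)\neq 0$ and $V^j(t)\neq 0$ for all $j\in\{1,\dots,S\}$ and all $t\in I$, system (A) is equivalent to the ''basic system'' obtained from (A) by replacing the component mole balances (CM$_0$) by the original component mole balances (OCM) (for all $i=1,\dots,C$) and replacing the total mole balances (TM) by the vapor summation equations (YS). That is, a tuple of state functions satisfying these non-vanishing conditions on $I$ solves (A) if and only if it solves the basic system.
   Context: Fix integers $S\ge 2$ (stages) and $C\ge 2$ (components) and an interval $I\subset\mathbb R$. Given are continuously differentiable real functions $f_{\mathrm{vle},i}(P,T,\mathbf x)$ ($i=1,\dots,C$), $f_{\mathrm{hl}}(T,\mathbf x)$, $f_{\mathrm{hv}}(T,\mathbf y)$, $f_{\mathrm{holdup}}(L)$, with $P,T,L\in\mathbb R$, $\mathbf x,\mathbf y\in\mathbb R^C$. Controls are continuously differentiable real functions $\epsilon,P,Q,T^{\mathrm{cond}}$ on $I$. State variables are real functions on $I$: $n^j,H^j,T^j,V^j$ and vectors $\mathbf x^j=(x^j_1,\dots,x^j_C)$, $\mathbf y^j=(y^j_1,\dots,y^j_C)$ for $j=1,\dots,S$, and $L^j$ for $j=1,\dots,S-1$. A solution of a system is a tuple of continuously differentiable state functions satisfying all its equations at every $t\in I$; dots are time derivatives. Two systems are equivalent as long as a condition holds if their sets of solutions satisfying that condition on $I$ coincide. Below, ''$2\le j\le S-1$'' marks the middle-stage equations. (TM): $\dot n^1=L^1-V^1$; $\dot n^j=L^j-V^j-L^{j-1}+V^{j-1}$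 ($2\le j\le S-1$); $\dot n^S=-\epsilon V^S-L^{S-1}+V^{S-1}$. (CM$_0$), for $i=1,\dots,C$: $\dot x_i^1=\big(L^1(x_i^2-x_i^1)-V^1(y_i^1-x_i^1)\big)/n^1$; $\dot x_i^j=\big(L^j(x_i^{j+1}-x_i^j)-V^j(y_i^j-x_i^j)+V^{j-1}(y_i^{j-1}-x_i^j)\big)/n^j$ ($2\le j\le S-1$); $\dot x_i^S=\big(-\epsilon V^S(y_i^S-x_i^S)+V^{S-1}(y_i^{S-1}-x_i^S)\big)/n^S$. (EB): $\dot H^1=L^1f_{\mathrm{hl}}(T^2,\mathbf x^2)-V^1f_{\mathrm{hv}}(T^1,\mathbf y^1)+Q$; $\dot H^j=L^jf_{\mathrm{hl}}(T^{j+1},\mathbf x^{j+1})-V^jf_{\mathrm{hv}}(T^j,\mathbf y^j)-L^{j-1}f_{\mathrm{hl}}(T^j,\mathbf x^j)+V^{j-1}f_{\mathrm{hv}}(T^{j-1},\mathbf y^{j-1})$ ($2\le j\le S-1$); $\dot H^S=(1-\epsilon)V^Sf_{\mathrm{hl}}(T^{\mathrm{cond}},\mathbf y^S)-V^Sf_{\mathrm{hv}}(T^S,\mathbf y^S)-L^{S-1}f_{\mathrm{hl}}(T^S,\mathbf x^S)+V^{S-1}f_{\mathrm{hv}}(T^{S-1},\mathbf y^{S-1})$. (XS): $\sum_{i=1}^C x_i^j=1$, $j=1,\dots,S$. (YD): $y_i^j=f_{\mathrm{vle},i}(P,T^j,\mathbf x^j)$ for all $i,j$. (ED): $H^j=n^jf_{\mathrm{hl}}(T^j,\mathbf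 x^j)$, $j=1,\dots,S$. (HO): $n^j=f_{\mathrm{holdup}}(L^{j-1})$, $j=2,\dots,S$. System (A) consists of (TM), (CM$_0$), (EB), (XS), (YD), (ED), (HO). (YS): $\sum_{i=1}^C y_i^j=1$, $j=1,\dots,S$. (OCM), for $i=1,\dots,C$: $\frac{d}{dt}(n^1x_i^1)=L^1x_i^2-V^1y_i^1$; $\frac{d}{dt}(n^jx_i^j)=L^jx_i^{j+1}-V^jy_i^j-L^{j-1}x_i^j+V^{j-1}y_i^{j-1}$ ($2\le j\le S-1$); $\frac{d}{dt}(n^Sx_i^S)=-\epsilon V^Sy_i^S-L^{S-1}x_i^S+V^{S-1}y_i^{S-1}$. *)

From HB Require Import structures.
From mathcomp Require Import all_boot all_order all_algebra.
From mathcomp Require Import reals.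
Set Implicit Arguments. Unset Strict Implicit. Unset Printing Implicit Defensive.
Import Order.TTheory GRing.Theory Num.Theory.
Local Open Scope ring_scope.

Section Calculus.
Variable R : realType.

Definition is_interval (I : R -> Prop) : Prop :=
  forall a b c, I a -> I c -> a <= b -> b <= c -> I b.

(* I contains at least two points (so derivatives on I are unique). *)
Definition nondeg_interval (I : R -> Prop) : Prop :=
  exists a b, [/\ I a, I b & a < b].

Definition has_deriv_on (I : R -> Prop) (f f' : R -> R) : Prop :=
  forall t, I t -> forall e : R, 0 < e -> exists2 d : R, 0 < d &
    forall s, I s -> s != t -> `|s - t| < d ->
      `|(f s - f t) / (s - t) - f' t| < e.

Definition cont_on (I : R -> Prop) (g : R -> R) : Prop :=
  forall t, I t -> forall e : R, 0 < e -> exists2 d : R, 0 < d &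
    forall s, I s -> `|s - t| < d -> `|g s - g t| < e.

Definition C1_on (I : R -> Prop) (f : R -> R) : Prop :=
  exists f', has_deriv_on I f f' /\ cont_on I f'.

Definition upd m (z : 'I_m -> R) (k : 'I_m) (h : R) : 'I_m -> R :=
  fun i => if i == k then z i + h else z i.

Definition contRm m (g : ('I_m -> R) -> R) : Prop :=
  forall z (e : R), 0 < e -> exists2 d : R, 0 < d &
    forall w, (forall i, `|w i - z i| < d) -> `|g w - g z| < e.

Definition C1Rm m (g : ('I_m -> R) -> R) : Prop :=
  exists dg : 'I_m -> ('I_m -> R) -> R,
    (forall k z (e : R), 0 < e -> exists2 d : R, 0 < d &
       forall h : R, h != 0 -> `|h| < d ->
         `|(g (upd z k h) - g z) / h - dg k z| < e)
    /\ (forall k, contRm (dg k)).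

(* packing (P, T, x) in R^(2+C) and (T, x) in R^(1+C) *)
Definition pack2 C (f : R -> R -> ('I_C -> R) -> R) : ('I_(2 + C) -> R) -> R :=
  fun z => f (z (lshift C (@ord0 1))) (z (lshift C (@ord_max 1)))
             (fun k => z (rshift 2 k)).
Definition pack1 C (f : R -> ('I_C -> R) -> R) : ('I_(1 + C) -> R) -> R :=
  fun z => f (z (lshift C (@ord0 0))) (fun k => z (rshift 1 k)).

End Calculus.

(* Stages are indexed by nat j with 1 <= j <= S (values
   at other indices are irrelevant); components by i : 'I_C.
   State:  n H T V : nat -> R -> R,  x y : nat -> 'I_C -> R -> R,
           L : nat -> R -> R (used for 1 <= j <= S-1).
   Controls: eps P Q Tc : R -> R. *)
Section Column.
Variable R : realType.
Variables (S C : nat) (I : R -> Prop).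
Variable fvle : 'I_C -> R -> R -> ('I_C -> R) -> R.
Variables (fhl fhv : R -> ('I_C -> R) -> R) (fholdup : R -> R).
Variables (eps P Q Tc : R -> R).
Variables (n H T V L : nat -> R -> R) (x y : nat -> 'I_C -> R -> R).

Definition xv j t : 'I_C -> R := fun i => x j i t.
Definition yv j t : 'I_C -> R := fun i => y j i t.

Definition TM : Prop :=
  [/\ has_deriv_on I (n 1%N) (fun t => L 1%N t - V 1%N t),
      (forall j, (2 <= j <= S.-1)%N ->
        has_deriv_on I (n j)
          (fun t => L j t - V j t - L j.-1 t + V j.-1 t))
    & has_deriv_on I (n S)
          (fun t => - eps t * V S t - L S.-1 t + V S.-1 t)].

Definition CM0 : Prop := forall i : 'I_C,
  [/\ has_deriv_on I (x 1%N i)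
        (fun t => (L 1%N t * (x 2%N i t - x 1%N i t)
                   - V 1%N t * (y 1%N i t - x 1%N i t)) / n 1%N t),
      (forall j, (2 <= j <= S.-1)%N ->
        has_deriv_on I (x j i)
          (fun t => (L j t * (x j.+1 i t - x j i t)
                     - V j t * (y j i t - x j i t)
                     + V j.-1 t * (y j.-1 i t - x j i t)) / n j t))
    & has_deriv_on I (x S i)
        (fun t => (- eps t * V S t * (y S i t - x S i t)
                   + V S.-1 t * (y S.-1 i t - x S i t)) / n S t)].

Definition EB : Prop :=
  [/\ has_deriv_on I (H 1%N)
        (fun t => L 1%N t * fhl (T 2%N t) (xv 2 t)
                  - V 1%N t * fhv (T 1%N t) (yv 1 t) + Q t),
      (forall j, (2 <= j <= S.-1)%N ->
        has_deriv_on I (H j)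
          (fun t => L j t * fhl (T j.+1 t) (xv j.+1 t)
                    - V j t * fhv (T j t) (yv j t)
                    - L j.-1 t * fhl (T j t) (xv j t)
                    + V j.-1 t * fhv (T j.-1 t) (yv j.-1 t)))
    & has_deriv_on I (H S)
        (fun t => (1 - eps t) * V S t * fhl (Tc t) (yv S t)
                  - V S t * fhv (T S t) (yv S t)
                  - L S.-1 t * fhl (T S t) (xv S t)
                  + V S.-1 t * fhv (T S.-1 t) (yv S.-1 t))].

Definition XS : Prop :=
  forall j, (1 <= j <= S)%N -> forall t, I t -> \sum_(i < C) x j i t = 1.

Definition YD : Prop :=
  forall j, (1 <= j <= S)%N -> forall (i : 'I_C) t, I t ->
    y j i t = fvle i (P t) (T j t) (xv j t).

Definition ED : Prop :=
  forall j, (1 <= j <= S)%N -> forall t, I t ->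
    H j t = n j t * fhl (T j t) (xv j t).

Definition HO : Prop :=
  forall j, (2 <= j <= S)%N -> forall t, I t ->
    n j t = fholdup (L j.-1 t).

Definition YS : Prop :=
  forall j, (1 <= j <= S)%N -> forall t, I t -> \sum_(i < C) y j i t = 1.

Definition OCM : Prop := forall i : 'I_C,
  [/\ has_deriv_on I (fun t => n 1%N t * x 1%N i t)
        (fun t => L 1%N t * x 2%N i t - V 1%N t * y 1%N i t),
      (forall j, (2 <= j <= S.-1)%N ->
        has_deriv_on I (fun t => n j t * x j i t)
          (fun t => L j t * x j.+1 i t - V j t * y j i t
                    - L j.-1 t * x j i t + V j.-1 t * y j.-1 i t))
    & has_deriv_on I (fun t => n S t * x S i t)
        (fun t => - eps t * V S t * y S i t - L S.-1 t * x S i t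
                  + V S.-1 t * y S.-1 i t)].

Definition systemA : Prop := TM /\ CM0 /\ EB /\ XS /\ YD /\ ED /\ HO.

Definition basic_system : Prop := YS /\ OCM /\ EB /\ XS /\ YD /\ ED /\ HO.

Definition states_C1 : Prop :=
  [/\ forall j, (1 <= j <= S)%N ->
        [/\ C1_on I (n j), C1_on I (H j), C1_on I (T j), C1_on I (V j)
          & forall i, C1_on I (x j i) /\ C1_on I (y j i)]
    & forall j, (1 <= j <= S.-1)%N -> C1_on I (L j)].

Definition nonvanishing : Prop :=
  forall t, I t -> eps t != 0 /\
    forall j, (1 <= j <= S)%N -> n j t != 0 /\ V j t != 0.

End Column.

(* Every stage has the shape of a middle stage once the missing end flows are
   set to zero.  On such a stage the product rule turns (CM0) into (OCM) and
   back, given (TM) and n <> 0.  Summing (CM0) over the components and using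
   (XS) leaves V_out (1 - sum_i y_i) / n = 0, so (YS) follows stage by stage
   from the bottom as long as V and eps do not vanish; conversely, summing
   (OCM) and using (XS) and (YS) gives (TM).  Comparing two derivatives of the
   same function is legitimate because I is a non-degenerate interval. *)

From HB Require Import structures.
From mathcomp Require Import all_boot all_order all_algebra.
From mathcomp Require Import all_classical all_reals all_analysis.
From mathcomp Require Import ring lra zify.
Set Implicit Arguments. Unset Strict Implicit. Unset Printing Implicit Defensive.
Import Order.TTheory GRing.Theory Num.Theory.
Import numFieldNormedType.Exports.
Local Open Scope ring_scope.

Section Derivatives.
Variables (R : realType) (I : R -> Prop).

Definition has_deriv_within (f f' : R -> R) (t : R) : Prop :=
  forall e : R, 0 < e -> exists2 d : R, 0 < d &
    forall s, I s -> s != t -> `|s - t| < d ->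
      `|(f s - f t) / (s - t) - f' t| < e.

Local Notation punctured t := (within (fun s => I s /\ s != t) (nbhs t)).

Lemma has_deriv_withinP f f' t : has_deriv_within f f' t <->
  ((fun s => (f s - f t) / (s - t)) @ punctured t --> f' t)%classic.
Proof.
split=> [df | /cvgrPdist_lt df].
- apply/cvgrPdist_lt => e e0; have [d d0 hd] := df e e0.
  rewrite near_withinE; apply/nbhs_normP; exists d => //= s st [Is nst].
  by rewrite distrC hd // distrC.
- move=> e e0; have := df e e0; rewrite near_withinE => /nbhs_normP [d d0 hd].
  by exists d => // s Is nst st; rewrite distrC hd //= distrC.
Qed.

Lemma has_deriv_within_cst c t : has_deriv_within (fun=> c) (fun=> 0) t.
Proof. by move=> e e0; exists 1 => // s _ _ _; rewrite subrr mul0r subr0 normr0. Qed.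

Lemma has_deriv_withinD f f' g g' t :
  has_deriv_within f f' t -> has_deriv_within g g' t ->
  has_deriv_within (f \+ g) (f' \+ g') t.
Proof.
rewrite !has_deriv_withinP => df dg.
have -> : (fun s => ((f \+ g) s - (f \+ g) t) / (s - t)) =
    (fun s => (f s - f t) / (s - t) + (g s - g t) / (s - t)).
  by apply/funext => s /=; ring.
exact: cvgD.
Qed.

Lemma has_deriv_withinM f f' g g' t :
  has_deriv_within f f' t -> has_deriv_within g g' t ->
  has_deriv_within (f \* g) (fun s => f' s * g s + f s * g' s) t.
Proof.
rewrite !has_deriv_withinP => df dg.
have g_cont : (g s @[s --> punctured t] --> g t)%classic.
  have g_expand : (fun s => g t + (g s - g t) / (s - t) * (s - t)) = g.
    apply/funext => s; have [->|nst] := eqVneq s t; first by rewrite !subrr mulr0 addr0.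
    by field; rewrite subr_eq0.
  have shift0 : ((fun s => s - t) @ punctured t --> 0)%classic.
    by rewrite -(subrr t); apply: cvgB; [exact: cvg_within | exact: cvg_cst].
  rewrite -[X in (X s @[s --> _] --> _)%classic]g_expand.
  have := @cvgD _ _ _ (punctured t) _ (fun=> g t)
    (fun s => (g s - g t) / (s - t) * (s - t)) (g t) (g' t * 0).
  rewrite mulr0 addr0; apply; first exact: cvg_cst.
  by have := cvgM dg shift0; rewrite mulr0; apply.
have -> : (fun s => ((f \* g) s - (f \* g) t) / (s - t)) =
    (fun s => (f s - f t) / (s - t) * g s + f t * ((g s - g t) / (s - t))).
  by apply/funext => s /=; ring.
by apply: cvgD; [exact: cvgM | apply: cvgM => //; exact: cvg_cst].
Qed.

Lemma has_deriv_on_ext f g f' g' :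
  (forall t, I t -> f t = g t) -> (forall t, I t -> f' t = g' t) ->
  has_deriv_on I f f' -> has_deriv_on I g g'.
Proof.
move=> efg ef'g' df t It e e0; have [d d0 hd] := df t It e e0.
by exists d => // s Is nst st; rewrite -!efg // -ef'g' // hd.
Qed.

Lemma has_deriv_on_cst c : has_deriv_on I (fun=> c) (fun=> 0).
Proof. by move=> t _; apply: has_deriv_within_cst. Qed.

Lemma has_deriv_onM f f' g g' : has_deriv_on I f f' -> has_deriv_on I g g' ->
  has_deriv_on I (fun s => f s * g s) (fun s => f' s * g s + f s * g' s).
Proof. by move=> df dg t It; apply: has_deriv_withinM (df t It) (dg t It). Qed.

Lemma has_deriv_on_sum (J : Type) (r : seq J) (F F' : J -> R -> R) :
  (forall j, has_deriv_on I (F j) (F' j)) ->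
  has_deriv_on I (fun s => \sum_(j <- r) F j s) (fun s => \sum_(j <- r) F' j s).
Proof.
move=> dF t It.
change (has_deriv_within (fun s => \sum_(j <- r) F j s)
                         (fun s => \sum_(j <- r) F' j s) t).
elim: r => [|j r IHr].
  have -> : (fun s => \sum_(j <- [::]) F j s) = fun=> 0.
    by apply/funext => s; rewrite big_nil.
  have -> : (fun s => \sum_(j <- [::]) F' j s) = fun=> 0.
    by apply/funext => s; rewrite big_nil.
  exact: has_deriv_within_cst.
have -> : (fun s => \sum_(i <- j :: r) F i s) = F j \+ (fun s => \sum_(i <- r) F i s).
  by apply/funext => s; rewrite big_cons.
have -> : (fun s => \sum_(i <- j :: r) F' i s) = F' j \+ (fun s => \sum_(i <- r) F' i s).
  by apply/funext => s; rewrite big_cons.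
exact: has_deriv_withinD (dF j t It) IHr.
Qed.

Hypotheses (I_interval : is_interval I) (I_nondeg : nondeg_interval I).

Lemma interval_near_point t d : I t -> 0 < d ->
  exists s, [/\ I s, s != t & `|s - t| < d].
Proof.
move=> It d0; have [a [b [Ia Ib ab]]] := I_nondeg.
have [tb|bt] := ltP t b.
  exists (t + Num.min d (b - t) / 2).
  have m0 : 0 < Num.min d (b - t) by rewrite lt_min d0 subr_gt0.
  have [md mb] : Num.min d (b - t) <= d /\ Num.min d (b - t) <= b - t.
    by rewrite !ge_min !lexx ?orbT.
  split; first (apply: (I_interval It Ib); lra); first by apply/eqP; lra.
  by rewrite addrC addKr ger0_norm; lra.
exists (t - Num.min d (t - a) / 2).
have m0 : 0 < Num.min d (t - a) by rewrite lt_min d0 subr_gt0; lra.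
have [md ma] : Num.min d (t - a) <= d /\ Num.min d (t - a) <= t - a.
  by rewrite !ge_min !lexx ?orbT.
split; first (apply: (I_interval Ia It); lra); first by apply/eqP; lra.
by rewrite addrC addKr normrN ger0_norm; lra.
Qed.

Lemma has_deriv_on_unique f f'1 f'2 :
  has_deriv_on I f f'1 -> has_deriv_on I f f'2 -> forall t, I t -> f'1 t = f'2 t.
Proof.
move=> df1 df2 t It; apply/eqP; apply/negPn/negP => neq.
have e0 : 0 < `|f'1 t - f'2 t| / 2 by rewrite divr_gt0 // normr_gt0 subr_eq0.
have [d1 d10 hd1] := df1 t It _ e0; have [d2 d20 hd2] := df2 t It _ e0.
have d0 : 0 < Num.min d1 d2 by rewrite lt_min d10 d20.
have [s [Is nst]] := interval_near_point It d0.
rewrite lt_min => /andP [st1 st2].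
have := hd1 s Is nst st1; have := hd2 s Is nst st2.
set q := (f s - f t) / (s - t).
have : `|f'1 t - f'2 t| <= `|q - f'2 t| + `|q - f'1 t|.
  by rewrite (_ : f'1 t - f'2 t = (q - f'2 t) - (q - f'1 t)) ?ler_normB //; ring.
lra.
Qed.

Lemma has_deriv_on_mulr_equiv u u' x x' {g : R -> R} :
  has_deriv_on I u u' -> has_deriv_on I x x' -> (forall t, I t -> u t != 0) ->
  has_deriv_on I (fun t => u t * x t) g <->
  has_deriv_on I x (fun t => (g t - u' t * x t) / u t).
Proof.
move=> du dx u_neq0; have dux := has_deriv_onM du dx; split=> [dg | dx2].
- apply: has_deriv_on_ext dx => // t It.
  by rewrite -(has_deriv_on_unique dux dg It); field; apply: u_neq0.
- apply: has_deriv_on_ext (has_deriv_onM du dx2) => // t It.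
  by field; apply: u_neq0.
Qed.

Lemma sum_deriv_eq0 (J : Type) (r : seq J) (F F' : J -> R -> R) (c : R) :
  (forall j, has_deriv_on I (F j) (F' j)) ->
  (forall t, I t -> \sum_(j <- r) F j t = c) ->
  forall t, I t -> \sum_(j <- r) F' j t = 0.
Proof.
move=> dF sumF t It.
have dsum : has_deriv_on I (fun s => \sum_(j <- r) F j s) (fun=> 0).
  by apply: has_deriv_on_ext (has_deriv_on_cst c) => // s Is; rewrite sumF.
exact: has_deriv_on_unique (has_deriv_on_sum r dF) dsum t It.
Qed.

End Derivatives.

Lemma big_lincomb4 (R : comPzRingType) (T : Type) (r : seq T) (a b c d : R)
    (u v w z : T -> R) :
  \sum_(i <- r) (a * u i - b * v i - c * w i + d * z i) =
  a * \sum_(i <- r) u i - b * \sum_(i <- r) v i - c * \sum_(i <- r) w i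
    + d * \sum_(i <- r) z i.
Proof. by elim: r => [|j r IHr]; rewrite ?big_nil ?big_cons ?IHr; ring. Qed.

(* A stage receives liquid [Lin] of composition [xin] from above and vapor
   [Vin] of composition [yin] from below, and sends vapor [Vout] of composition
   [y] up and liquid [Lout] of composition [x] down. *)
Section Stage.
Variables (R : realType) (C : nat) (I : R -> Prop).
Variables (n Lin Vout Lout Vin : R -> R) (x xin y yin : 'I_C -> R -> R).

Definition stage_TM : Prop :=
  has_deriv_on I n (fun t => Lin t - Vout t - Lout t + Vin t).

Definition stage_CM0 : Prop := forall i,
  has_deriv_on I (x i) (fun t => (Lin t * (xin i t - x i t) - Vout t * (y i t - x i t)
                                  + Vin t * (yin i t - x i t)) / n t).

Definition stage_OCM : Prop := forall i,
  has_deriv_on I (fun t => n t * x i t)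
    (fun t => Lin t * xin i t - Vout t * y i t - Lout t * x i t + Vin t * yin i t).

Hypotheses (I_interval : is_interval I) (I_nondeg : nondeg_interval I).
Hypothesis n_neq0 : forall t, I t -> n t != 0.

Let sum_eq1 (z : 'I_C -> R -> R) := forall t, I t -> \sum_(i < C) z i t = 1.

Lemma stage_CM0_OCM : (forall i, exists x', has_deriv_on I (x i) x') ->
  stage_TM -> stage_CM0 <-> stage_OCM.
Proof.
move=> dx dn; split=> dCM i; have [x' dxi] := dx i.
- apply/(has_deriv_on_mulr_equiv I_interval I_nondeg dn dxi n_neq0).
  by apply: has_deriv_on_ext (dCM i) => // t It; ring.
- move/(has_deriv_on_mulr_equiv I_interval I_nondeg dn dxi n_neq0): (dCM i).
  by apply: has_deriv_on_ext => // t It; ring.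
Qed.

Lemma stage_OCM_TM : sum_eq1 x -> sum_eq1 xin -> sum_eq1 y -> sum_eq1 yin ->
  stage_OCM -> stage_TM.
Proof.
move=> sx sxin sy syin dOCM.
apply: has_deriv_on_ext (has_deriv_on_sum (index_enum 'I_C) dOCM) => t It.
  by rewrite -mulr_sumr sx ?mulr1.
by rewrite big_lincomb4 sx ?sxin ?sy ?syin // !mulr1.
Qed.

Lemma stage_CM0_sum_y : (forall t, I t -> Vout t != 0) ->
  sum_eq1 x -> sum_eq1 xin -> sum_eq1 yin -> stage_CM0 -> sum_eq1 y.
Proof.
move=> Vout_neq0 sx sxin syin dCM t It.
have := sum_deriv_eq0 I_interval I_nondeg dCM sx It.
rewrite (eq_bigr (fun i => Lin t / n t * xin i t - Vout t / n t * y i t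
    - (Lin t - Vout t + Vin t) / n t * x i t + Vin t / n t * yin i t));
  last by move=> i _; ring.
rewrite big_lincomb4 sx // sxin // syin // => sum_rhs0.
have : Vout t / n t * (1 - \sum_(i < C) y i t) = 0 by rewrite -[RHS]sum_rhs0; ring.
move/eqP; rewrite !mulf_eq0 invr_eq0 (negbTE (Vout_neq0 t It)) (negbTE (n_neq0 It)) /=.
by rewrite subr_eq0 => /eqP.
Qed.
End Stage.

Section Column.
Variables (R : realType) (S C : nat) (I : R -> Prop) (eps : R -> R).
Variables (n V L : nat -> R -> R) (x y : nat -> 'I_C -> R -> R).
Hypothesis S_ge2 : (2 <= S)%N.

(* Stage 1 has no flows from below and stage S no liquid from above; the
   vapor leaving stage S is eps V^S.  The stand-in compositions x^S and x^1
   only meet zero flows and are chosen because they sum to one. *)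
Definition liq_in j := if j == S then fun=> 0 else L j.
Definition vap_out j := if j == S then fun t => eps t * V S t else V j.
Definition liq_out j := if j == 1%N then fun=> 0 else L j.-1.
Definition vap_in j := if j == 1%N then fun=> 0 else V j.-1.
Definition x_in j := if j == S then x S else x j.+1.
Definition y_in j := if j == 1%N then x 1%N else y j.-1.

Let TM_at j := stage_TM I (n j) (liq_in j) (vap_out j) (liq_out j) (vap_in j).
Let CM0_at j :=
  stage_CM0 I (n j) (liq_in j) (vap_out j) (vap_in j) (x j) (x_in j) (y j) (y_in j).
Let OCM_at j := stage_OCM I (n j) (liq_in j) (vap_out j) (liq_out j) (vap_in j)
  (x j) (x_in j) (y j) (y_in j).

Lemma stage_cases j : (1 <= j <= S)%N ->
  [\/ j = 1%N, (2 <= j <= S.-1)%N | j = S].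
Proof.
move=> hj; have [j_lt2|j_ge2] := ltnP j 2; first by apply: Or31; lia.
by have [->|/eqP j_neqS] := eqVneq j S; [apply: Or33 | apply: Or32; lia].
Qed.

Let S_neq1 : (S == 1%N) = false.
Proof. by apply/eqP; lia. Qed.

Let one_neqS : (1 == S)%N = false.
Proof. by rewrite eq_sym S_neq1. Qed.

Let middle_neq j : (2 <= j <= S.-1)%N -> (j == 1%N) = false /\ (j == S) = false.
Proof. by move=> hj; split; apply/eqP; lia. Qed.

Let bottom_stage : (1 <= 1 <= S)%N. Proof. lia. Qed.
Let top_stage : (1 <= S <= S)%N. Proof. lia. Qed.
Let middle_stage j : (2 <= j <= S.-1)%N -> (1 <= j <= S)%N. Proof. lia. Qed.

Local Ltac stage_data_simpl :=
  rewrite /TM_at /CM0_at /OCM_at /liq_in /vap_out /liq_out /vap_in /x_in /y_in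
    ?eqxx ?S_neq1 ?one_neqS /=.

Lemma TM_stagewise : TM S I eps n V L <-> forall j, (1 <= j <= S)%N -> TM_at j.
Proof.
split=> [[d1 dmid dS] j /stage_cases [->|hj|->] | dst].
- by stage_data_simpl; apply: has_deriv_on_ext d1 => // t _; ring.
- by have [j1 jS] := middle_neq hj; stage_data_simpl; rewrite j1 jS; exact: dmid.
- by stage_data_simpl; apply: has_deriv_on_ext dS => // t _; ring.
split.
- have := dst _ bottom_stage; stage_data_simpl.
  by apply: has_deriv_on_ext => // t _; ring.
- move=> j hj; have := dst _ (middle_stage hj).
  by have [j1 jS] := middle_neq hj; stage_data_simpl; rewrite j1 jS.
- have := dst _ top_stage; stage_data_simpl.
  by apply: has_deriv_on_ext => // t _; ring.
Qed.

Lemma CM0_stagewise : CM0 S I eps n V L x y <-> forall j, (1 <= j <= S)%N -> CM0_at j.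
Proof.
split=> [dCM j /stage_cases [->|hj|->] i | dst i].
- have [d1 _ _] := dCM i; stage_data_simpl.
  by apply: has_deriv_on_ext d1 => // t _; ring.
- have [_ dmid _] := dCM i; have [j1 jS] := middle_neq hj.
  by stage_data_simpl; rewrite j1 jS; exact: dmid.
- have [_ _ dS] := dCM i; stage_data_simpl.
  by apply: has_deriv_on_ext dS => // t _; ring.
split.
- have := dst _ bottom_stage i; stage_data_simpl.
  by apply: has_deriv_on_ext => // t _; ring.
- move=> j hj; have := dst _ (middle_stage hj) i.
  by have [j1 jS] := middle_neq hj; stage_data_simpl; rewrite j1 jS.
- have := dst _ top_stage i; stage_data_simpl.
  by apply: has_deriv_on_ext => // t _; ring.
Qed.

Lemma OCM_stagewise : OCM S I eps n V L x y <-> forall j, (1 <= j <= S)%N -> OCM_at j.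
Proof.
split=> [dOCM j /stage_cases [->|hj|->] i | dst i].
- have [d1 _ _] := dOCM i; stage_data_simpl.
  by apply: has_deriv_on_ext d1 => // t _; ring.
- have [_ dmid _] := dOCM i; have [j1 jS] := middle_neq hj.
  by stage_data_simpl; rewrite j1 jS; exact: dmid.
- have [_ _ dS] := dOCM i; stage_data_simpl.
  by apply: has_deriv_on_ext dS => // t _; ring.
split.
- have := dst _ bottom_stage i; stage_data_simpl.
  by apply: has_deriv_on_ext => // t _; ring.
- move=> j hj; have := dst _ (middle_stage hj) i.
  by have [j1 jS] := middle_neq hj; stage_data_simpl; rewrite j1 jS.
- have := dst _ top_stage i; stage_data_simpl.
  by apply: has_deriv_on_ext => // t _; ring.
Qed.

Hypotheses (I_interval : is_interval I) (I_nondeg : nondeg_interval I).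
Hypothesis column_nonvanishing : nonvanishing S I eps n V.
Hypothesis x_deriv :
  forall j i, (1 <= j <= S)%N -> exists x', has_deriv_on I (x j i) x'.

Let n_neq0 j : (1 <= j <= S)%N -> forall t, I t -> n j t != 0.
Proof. by move=> hj t It; have [_ /(_ j hj) []] := column_nonvanishing It. Qed.

Lemma vap_out_neq0 j : (1 <= j <= S)%N -> forall t, I t -> vap_out j t != 0.
Proof.
move=> hj t It; have [eps_neq0 nV] := column_nonvanishing It.
rewrite /vap_out; have [_|_] := eqVneq j S; last by have [] := nV j hj.
by rewrite /= mulf_neq0 //; have [] := nV S top_stage.
Qed.

Lemma sum_x_in : XS S I x ->
  forall j, (1 <= j <= S)%N -> forall t, I t -> \sum_(i < C) x_in j i t = 1.
Proof.
by move=> hXS j hj; rewrite /x_in; case: eqVneq => [_|/eqP j_neqS]; apply: hXS; lia.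
Qed.

Lemma CM0_YS : XS S I x -> CM0 S I eps n V L x y -> YS S I y.
Proof.
move=> hXS /CM0_stagewise dCM; elim=> [//|j IHj] hj.
apply: (stage_CM0_sum_y I_interval I_nondeg (n_neq0 hj) (vap_out_neq0 hj) _ _ _
  (dCM _ hj)).
- exact: hXS hj.
- exact: sum_x_in hXS _ hj.
- by rewrite /y_in; case: j IHj hj => [|j] IHj hj /=; [apply: hXS | apply: IHj]; lia.
Qed.

Lemma CM0_OCM : TM S I eps n V L -> CM0 S I eps n V L x y -> OCM S I eps n V L x y.
Proof.
move=> /TM_stagewise dTM /CM0_stagewise dCM; apply/OCM_stagewise => j hj.
have dx i : exists x', has_deriv_on I (x j i) x' by exact: x_deriv.
exact: (stage_CM0_OCM _ _ _ I_interval I_nondeg (n_neq0 hj) dx (dTM j hj)).1 (dCM j hj).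
Qed.

Lemma OCM_CM0 : TM S I eps n V L -> OCM S I eps n V L x y -> CM0 S I eps n V L x y.
Proof.
move=> /TM_stagewise dTM /OCM_stagewise dOCM; apply/CM0_stagewise => j hj.
have dx i : exists x', has_deriv_on I (x j i) x' by exact: x_deriv.
exact: (stage_CM0_OCM _ _ _ I_interval I_nondeg (n_neq0 hj) dx (dTM j hj)).2 (dOCM j hj).
Qed.

Lemma OCM_TM : XS S I x -> YS S I y -> OCM S I eps n V L x y -> TM S I eps n V L.
Proof.
move=> hXS hYS /OCM_stagewise dOCM; apply/TM_stagewise => j hj.
apply: stage_OCM_TM (dOCM j hj); [exact: hXS hj | exact: sum_x_in | exact: hYS hj |].
by rewrite /y_in; case: eqVneq => [_|/eqP j_neq1]; [apply: hXS | apply: hYS]; lia.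
Qed.

End Column.

Theorem mainTheorem1 (R : realType) (S C : nat) (hS : (2 <= S)%N) (hC : (2 <= C)%N)
  (I : R -> Prop) (hI : is_interval I) (hI2 : nondeg_interval I)
  (fvle : 'I_C -> R -> R -> ('I_C -> R) -> R)
  (fhl fhv : R -> ('I_C -> R) -> R) (fholdup : R -> R)
  (hfvle : forall i, C1Rm (pack2 (fvle i)))
  (hfhl : C1Rm (pack1 fhl)) (hfhv : C1Rm (pack1 fhv))
  (hfholdup : C1_on (fun _ => True) fholdup)
  (eps P Q Tc : R -> R)
  (hctrl : [/\ C1_on I eps, C1_on I P, C1_on I Q & C1_on I Tc])
  (n H T V L : nat -> R -> R) (x y : nat -> 'I_C -> R -> R)
  (hstates : states_C1 S I n H T V L x y)
  (hnz : nonvanishing S I eps n V) :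
  systemA S I fvle fhl fhv fholdup eps P Q Tc n H T V L x y <->
  basic_system S I fvle fhl fhv fholdup eps P Q Tc n H T V L x y.
Proof.
have x_deriv j i : (1 <= j <= S)%N -> exists x', has_deriv_on I (x j i) x'.
  by move=> hj; have [/(_ j hj) [_ _ _ _ /(_ i) [[x' [dx _]] _]] _] := hstates; exists x'.
split=> [[hTM [hCM0 rest]] | [hYS [hOCM rest]]]; have [_ [hXS _]] := rest.
- have hYS := CM0_YS hS hI hI2 hnz hXS hCM0.
  by split=> //; split=> //; exact: CM0_OCM hS hI hI2 hnz x_deriv hTM hCM0.
- have hTM := OCM_TM hS hXS hYS hOCM.
  by split=> //; split=> //; exact: OCM_CM0 hS hI hI2 hnz x_deriv hTM hOCM.
Qed.
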